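(* Let $n\geq 2$ be an integer, let $m\neq\pm1$ be a square-free integer, let $\sqrt[n]{m}$ denote a root of $X^n-m$, and let $M=\mathbb{Q}(\sqrt[n]{m})$ with ring of integers $\mathcal{O}_M$. Then $$\frac{n}{\gcd(n,m)}\cdot \mathcal{O}_M\subset \mathbb{Z}[\sqrt[n]{m}].$$ *)

From mathcomp Require Import all_boot all_order all_algebra all_field.
Set Implicit Arguments. Unset Strict Implicit. Unset Printing Implicit Defensive.
Import GRing.Theory Num.Theory.
Local Open Scope ring_scope.

Definition squarefree_int (m : int) : Prop :=
  forall p : nat, prime p -> ~~ (p ^ 2 %| `|m|)%N.

Definition in_Qadj (a x : algC) : Prop :=
  exists p : {poly rat}, x = (map_poly ratr p).[a].

Definition in_Zadj (a x : algC) : Prop :=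
  exists p : {poly int}, x = (map_poly (fun z : int => z%:~R) p).[a].

Definition in_ringOfIntegers (a x : algC) : Prop :=
  in_Qadj a x /\ x \in Aint.

From mathcomp Require Import all_boot all_order all_algebra all_field.
From mathcomp Require Import zify ring.

Set Implicit Arguments.
Unset Strict Implicit.

Import GRing.Theory Num.Theory.
Local Open Scope ring_scope.

(* Write x = R(a) with R in Q[X] of degree < n.  Since X^n - m is irreducible,
   the z^k a (z a primitive n-th root of unity) are conjugates of a, and
   averaging z^(-kj) R(z^k a) over k shows that n R_j a^j is an algebraic
   integer; multiplying by a^(n-j) sgn(m) puts b_j := n |m| R_j in Z.  Then
   (sum_j b_j a^j) / (g |m|) = (n/g) x is integral, where g = gcd(n, m), and
   every prime p dividing g |m| divides m exactly once, so an Eisenstein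
   argument (multiply by a^(n-1-k), raise to the n-th power) gives g |m| | b_j,
   i.e. (n/g) R has integer coefficients.  The same argument applied to
   sum_j b_j a^j = 0 proves the irreducibility. *)

Lemma prime_dvd_of_expn_dvd (p m c k : nat) :
  prime p -> (p %| m)%N -> ~~ (p ^ 2 %| m)%N ->
  (p ^ k.+1 %| c ^ k.+1 * m ^ k)%N -> (p %| c)%N.
Proof.
move=> p_pr /dvdnP[m' ->] p2_ndvd.
rewrite expnMn mulnA [(p ^ k.+1)%N]expnS dvdn_pmul2r ?expn_gt0 ?prime_gt0 //.
rewrite Euclid_dvdM // !Euclid_dvdX // => /orP[/andP[] // | /andP[p_dvd_m' _]].
by case/negP: p2_ndvd; rewrite mulnC dvdn_pmul2l ?prime_gt0.
Qed.

Lemma dvdn_subn_addn (n i j : nat) :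
  (i < n)%N -> (j < n)%N -> (n %| n - j + i)%N = (i == j).
Proof.
move=> lt_in lt_jn; case: (ltngtP i j) => [lt_ij | lt_ji | ->].
- by apply/negP => /dvdn_leq; lia.
- rewrite (_ : n - j + i = n + (i - j))%N; last by lia.
  by rewrite dvdn_addr //; apply/negP => /dvdn_leq; lia.
- by rewrite subnK ?dvdnn // ltnW.
Qed.

Lemma sum_prim_root_expr (R : idomainType) (n e : nat) (z : R) :
  n.-primitive_root z ->
  \sum_(k < n) z ^+ (k * e) = if (n %| e)%N then n%:R else 0.
Proof.
move=> z_prim; under eq_bigr do rewrite mulnC exprM.
rewrite (prim_order_dvd z_prim).
have [-> | ze_neq1] := eqVneq (z ^+ e) 1.
  by rewrite (eq_bigr (fun=> 1)) ?sumr_const ?card_ord // => k _; rewrite expr1n.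
have : (z ^+ e) ^+ n = 1 by rewrite -exprM mulnC exprM (prim_expr_order z_prim) expr1n.
move/eqP; rewrite -subr_eq0 subrX1 mulf_eq0 subr_eq0 (negbTE ze_neq1) /=.
by move/eqP.
Qed.

Lemma prim_root_coef_sum (R : idomainType) (n j : nat) (z a : R) (Q : {poly R}) :
  n.-primitive_root z -> (size Q <= n)%N -> (j < n)%N ->
  \sum_(k < n) z ^+ (k * (n - j)) * Q.[z ^+ k * a] = n%:R * Q`_j * a ^+ j.
Proof.
move=> z_prim szQ lt_jn.
have inner i : \sum_(k < n) z ^+ (k * (n - j)) * (Q`_i * (z ^+ k * a) ^+ i)
    = Q`_i * a ^+ i * \sum_(k < n) z ^+ (k * (n - j + i)).
  rewrite mulr_sumr; apply: eq_bigr => k _.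
  by rewrite exprMn -exprM mulnDr exprD; ring.
under eq_bigr do rewrite (horner_coef_wide _ szQ) mulr_sumr.
rewrite exchange_big /= (bigD1 (Ordinal lt_jn)) //= [X in _ + X]big1 ?addr0.
  by rewrite inner sum_prim_root_expr // dvdn_subn_addn // eqxx; ring.
move=> i; rewrite -val_eqE /= => /negbTE neq_ij.
by rewrite inner sum_prim_root_expr // dvdn_subn_addn // neq_ij mulr0.
Qed.

Lemma in_Zadj_polyOver_int (a : algC) (R : {poly rat}) :
  R \is a polyOver Num.int -> in_Zadj a (map_poly ratr R).[a].
Proof.
move=> /floorpP[q ->]; exists q; rewrite -map_poly_comp.
by congr (_.[a]); apply: eq_map_poly => z /=; rewrite ratr_int.
Qed.

Lemma squarefree_int_neq0 (m : int) : squarefree_int m -> m != 0.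
Proof. by move=> sqf_m; apply/eqP => m0; have := sqf_m 2%N isT; rewrite m0. Qed.

Lemma squarefree_prime_dvd (m : int) :
  squarefree_int m -> m != 1 -> m != -1 -> exists2 p, prime p & (p %| `|m|)%N.
Proof.
move=> sqf_m m_neq1 m_neqN1; exists (pdiv `|m|); [apply: pdiv_prime | exact: pdiv_dvd].
have := squarefree_int_neq0 sqf_m.
by case: m sqf_m m_neq1 m_neqN1 => [[|[|k]]|[|k]].
Qed.

Section PureRoot.

Variables (n : nat) (m : int) (a : algC).
Hypotheses (n_gt0 : (0 < n)%N) (a_n : a ^+ n = m%:~R).

Lemma Aint_pure_root : a \in Aint.
Proof.
apply: (@root_monic_Aint ('X^n - (m%:~R)%:P)).
- by rewrite /root !hornerE a_n subrr.
- exact: monicXnsubC.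
apply/polyOverP=> i; rewrite coefB coefC -mulrb coefXn.
by rewrite rpredB // ?rpred_nat // rpredMn // rpred_int.
Qed.

Lemma Aint_lead_term (p k : nat) (b : nat -> int) :
  prime p -> (p %| `|m|)%N -> (k < n)%N ->
  (forall i, (i < k)%N -> (p%:Z %| b i)%Z) ->
  (\sum_(i < n) (b i)%:~R * a ^+ i) / p%:R \in Aint ->
  (b k)%:~R * a ^+ n.-1 / p%:R \in Aint.
Proof.
move=> p_pr p_dvd_m lt_kn p_dvd_b sumA.
(* After multiplication by a^(n-1-k), every term but the k-th is visibly
   divisible by p: the lower ones because p | b_i, the higher ones because
   they pick up a factor a^n = m. *)
have p_neq0 : p%:R != 0 :> algC by rewrite pnatr_eq0 -lt0n prime_gt0.
set e := (n.-1 - k)%N.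
have termA i : i != k -> (i < n)%N -> (b i)%:~R * a ^+ (i + e) / p%:R \in Aint.
  case: (ltngtP i k) => // [lt_ik | lt_ki] _ lt_in.
    have [c ->] := dvdzP (p_dvd_b i lt_ik).
    by rewrite intrM mulrAC mulfK // rpredM ?rpredX ?Aint_int ?Aint_pure_root.
  have [m' def_m] := dvdzP (p_dvd_m : (p%:Z %| m)%Z).
  have -> : (b i)%:~R * a ^+ (i + e) / p%:R = (b i * m')%:~R * a ^+ (i.-1 - k).
    rewrite (_ : i + e = n + (i.-1 - k))%N; last by lia.
    by rewrite exprD a_n def_m !intrM; field.
  by rewrite rpredM ?rpredX ?Aint_int ?Aint_pure_root.
have shift : (\sum_(i < n) (b i)%:~R * a ^+ i) / p%:R * a ^+ e
    = \sum_(i < n) (b i)%:~R * a ^+ (i + e) / p%:R.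
  by rewrite !mulr_suml; apply: eq_bigr => i _; rewrite exprD; field.
have -> : (b k)%:~R * a ^+ n.-1 / p%:R = (\sum_(i < n) (b i)%:~R * a ^+ i) / p%:R * a ^+ e
    - \sum_(i < n | i != Ordinal lt_kn) (b i)%:~R * a ^+ (i + e) / p%:R.
  by rewrite shift (bigD1 (Ordinal lt_kn)) //= addrK subnKC //; lia.
apply: rpredB; first by rewrite rpredM ?rpredX ?Aint_pure_root.
by apply: rpred_sum => i neq_ik; apply: (termA _ neq_ik (ltn_ord i)).
Qed.

Lemma dvd_of_Aint_lead (p : nat) (c : int) :
  prime p -> (p %| `|m|)%N -> ~~ (p ^ 2 %| `|m|)%N ->
  c%:~R * a ^+ n.-1 / p%:R \in Aint -> (p %| `|c|)%N.
Proof.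
move=> p_pr p_dvd_m p2_ndvd; move: a_n; case: n n_gt0 => // k _ a_k1 /= tA.
apply: (@prime_dvd_of_expn_dvd _ _ _ k p_pr p_dvd_m p2_ndvd).
have def_t : (c%:~R * a ^+ k / p%:R) ^+ k.+1 = (c ^+ k.+1 * m ^+ k)%:~R / (p ^ k.+1)%:R.
  by rewrite !exprMn -exprM mulnC exprM a_k1 exprVn rmorphM /= !rmorphXn.
have : (c%:~R * a ^+ k / p%:R) ^+ k.+1 \in Num.int.
  apply: Cint_rat_Aint; last exact: rpredX.
  by rewrite def_t rpred_div ?rpred_int ?rpred_nat.
have pk_neq0 : (p ^ k.+1)%:R != 0 :> algC.
  by rewrite pnatr_eq0 -lt0n expn_gt0 prime_gt0.
case/intrP => z; rewrite def_t => def_z.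
have : (c ^+ k.+1 * m ^+ k)%:~R = z%:~R * ((p ^ k.+1)%N%:Z)%:~R :> algC.
  by rewrite -def_z divfK.
rewrite -intrM => /intr_inj /(congr1 absz); rewrite !abszM !abszX /= => ->.
exact: dvdn_mull.
Qed.

Lemma eisenstein_dvd (p : nat) (b : nat -> int) :
  prime p -> (p %| `|m|)%N -> ~~ (p ^ 2 %| `|m|)%N ->
  (\sum_(i < n) (b i)%:~R * a ^+ i) / p%:R \in Aint ->
  forall i, (i < n)%N -> (p%:Z %| b i)%Z.
Proof.
move=> p_pr p_dvd_m p2_ndvd sumA; elim/ltn_ind => k IH lt_kn.
rewrite dvdzE; apply: (dvd_of_Aint_lead p_pr p_dvd_m p2_ndvd).
apply: (Aint_lead_term p_pr p_dvd_m lt_kn _ sumA) => i lt_ik.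
exact: IH i lt_ik (ltn_trans lt_ik lt_kn).
Qed.

Hypothesis sqf_m : squarefree_int m.

Lemma Aint_div_dvd (q : nat) (b : nat -> int) :
  (0 < q)%N -> (forall p, prime p -> (p %| q)%N -> (p %| `|m|)%N) ->
  (\sum_(i < n) (b i)%:~R * a ^+ i) / q%:R \in Aint ->
  forall i, (i < n)%N -> (q%:Z %| b i)%Z.
Proof.
elim/ltn_ind: q b => q IH b q_gt0 q_m sumA i lt_in.
have [-> | q_neq1] := eqVneq q 1%N; first exact: dvd1z.
have p_pr : prime (pdiv q) by rewrite pdiv_prime // ltn_neqAle eq_sym q_neq1.
have [q' def_q] := dvdnP (pdiv_dvd q).
set p := pdiv q in p_pr def_q.
have q'_gt0 : (0 < q')%N by move: q_gt0; rewrite def_q muln_gt0 => /andP[].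
have p_neq0 : p%:R != 0 :> algC by rewrite pnatr_eq0 -lt0n prime_gt0.
have q'_neq0 : q'%:R != 0 :> algC by rewrite pnatr_eq0 -lt0n.
have p_dvd_b j : (j < n)%N -> (p%:Z %| b j)%Z.
  apply: (eisenstein_dvd p_pr (q_m _ p_pr (pdiv_dvd q)) (sqf_m p_pr)).
  set S := \sum_(i < n) _ in sumA *.
  have -> : S / p%:R = S / q%:R * q'%:R.
    by rewrite def_q natrM; field; rewrite p_neq0 q'_neq0.
  by rewrite rpredM ?rpred_nat.
pose c j := (b j %/ p)%Z.
have def_b j : (j < n)%N -> b j = c j * p by move/p_dvd_b/divzK.
have : (q'%:Z %| c i)%Z.
  apply: (IH q' _ c q'_gt0 _ _ i lt_in).
  - by rewrite def_q ltn_Pmulr ?prime_gt1.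
  - by move=> r r_pr r_dvd; apply: q_m r_pr _; rewrite def_q dvdn_mulr.
  congr (_ \in Aint): sumA; rewrite def_q natrM !mulr_suml; apply: eq_bigr => j _.
  by rewrite def_b // intrM; field; rewrite p_neq0 q'_neq0.
by rewrite def_b // def_q PoszM dvdz_mul2r // -lt0n prime_gt0.
Qed.

Lemma polyOver_int_of_scaled (R : {poly rat}) (d : nat) :
  (size R <= n)%N -> (map_poly ratr R).[a] \in Aint ->
  (0 < d)%N -> (forall p, prime p -> (p %| d)%N -> (p %| `|m|)%N) ->
  (forall j, (j < n)%N -> d%:R * R`_j \is a Num.int) ->
  R \is a polyOver Num.int.
Proof.
move=> szR RaA d_gt0 d_m dR_int.
have d_neq0 : d%:R != 0 :> rat by rewrite pnatr_eq0 -lt0n.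
pose b j := Num.floor (d%:R * R`_j).
have def_b j : (j < n)%N -> (b j)%:~R = d%:R * R`_j by move/dR_int/floorK.
have sumA : (\sum_(i < n) (b i)%:~R * a ^+ i) / d%:R \in Aint.
  congr (_ \in Aint): RaA.
  rewrite (horner_coef_wide _ (_ : size (map_poly ratr R) <= n)%N) ?size_map_poly //.
  rewrite mulr_suml; apply: eq_bigr => i _.
  rewrite coef_map /= -ratr_int def_b // rmorphM /= ratr_nat; field.
  by rewrite pnatr_eq0 -lt0n.
apply/polyOverP => j; have [lt_jn | le_nj] := ltnP j n; last first.
  by rewrite nth_default ?rpred0 // (leq_trans szR).
have [e def_bj] := dvdzP (Aint_div_dvd d_gt0 d_m sumA lt_jn).
suff -> : R`_j = e%:~R by rewrite rpred_int.
by apply: (mulfI d_neq0); rewrite -def_b // def_bj intrM mulrC.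
Qed.

Hypotheses (m_neq1 : m != 1) (m_neqN1 : m != -1).

Lemma pure_root_int_indep (b : nat -> int) :
  \sum_(i < n) (b i)%:~R * a ^+ i = 0 -> forall i, (i < n)%N -> b i = 0.
Proof.
move=> sum0 i lt_in.
have [p p_pr p_dvd_m] := squarefree_prime_dvd sqf_m m_neq1 m_neqN1.
have pk_dvd k : ((p ^ k)%N%:Z %| b i)%Z.
  apply: (Aint_div_dvd (b := b) _ _ _ lt_in); first by rewrite expn_gt0 prime_gt0.
    by move=> r r_pr; rewrite Euclid_dvdX // dvdn_prime2 // => /andP[/eqP-> _].
  by rewrite sum0 mul0r Aint0.
apply/eqP; apply: contraT => bi_neq0.
have := pk_dvd `|b i|%N; rewrite dvdzE /= => /dvdn_leq.
by rewrite absz_gt0 bi_neq0 leqNgt ltn_expl ?prime_gt1 // => /(_ isT).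
Qed.

Lemma pure_root_poly_eq0 (R : {poly rat}) :
  (size R <= n)%N -> (map_poly ratr R).[a] = 0 -> R = 0.
Proof.
move=> szR Ra0; have [q [d d_neq0 def_R]] := rat_poly_scale R.
have coefR i : R`_i = d%:~R^-1 * (q`_i)%:~R by rewrite def_R coefZ coef_map.
have q_a : \sum_(i < n) (q`_i)%:~R * a ^+ i = 0.
  move: Ra0; rewrite (horner_coef_wide _ (_ : size (map_poly ratr R) <= n)%N) ?size_map_poly //.
  under eq_bigr do rewrite coef_map /= coefR rmorphM fmorphV /= !ratr_int -mulrA.
  by rewrite -mulr_sumr => /eqP; rewrite mulf_eq0 invr_eq0 intr_eq0 (negbTE d_neq0) => /eqP.
apply/polyP => i; rewrite coef0; have [lt_in | le_ni] := ltnP i n.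
  by rewrite coefR (pure_root_int_indep q_a lt_in) mulr0.
by rewrite nth_default // (leq_trans szR).
Qed.

Local Notation pure_poly := ('X^n - (m%:~R)%:P : {poly rat}).

Lemma root_pure_poly (c : algC) :
  c ^+ n = m%:~R -> (map_poly ratr pure_poly).[c] = 0.
Proof.
by move=> c_n; rewrite rmorphB /= map_polyXn map_polyC /= ratr_int !hornerE c_n subrr.
Qed.

Lemma size_modp_pure_poly (P : {poly rat}) : (size (P %% pure_poly)%R <= n)%N.
Proof.
have size_pure : size pure_poly = n.+1 := size_XnsubC _ n_gt0.
by rewrite -ltnS -size_pure ltn_modp -size_poly_eq0 size_pure.
Qed.

Lemma horner_modp_pure_poly (P : {poly rat}) :
  (map_poly ratr (P %% pure_poly)).[a] = (map_poly ratr P).[a].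
Proof.
rewrite [in RHS](divp_eq P pure_poly) rmorphD rmorphM /= hornerD hornerM.
by rewrite root_pure_poly // mulr0 add0r.
Qed.

Lemma pure_poly_dvdp (H : {poly rat}) :
  (map_poly ratr H).[a] = 0 -> pure_poly %| H.
Proof.
move=> Ha0; apply/modp_eq0P/pure_root_poly_eq0.
  exact: size_modp_pure_poly.
by rewrite horner_modp_pure_poly.
Qed.

Lemma Aint_conj_pure_root (c : algC) (P : {poly rat}) :
  c ^+ n = m%:~R -> (map_poly ratr P).[a] \in Aint -> (map_poly ratr P).[c] \in Aint.
Proof.
move=> c_n PaA; set x := _.[a] in PaA.
have [h [def_h _] _] := minCpolyP x.
have hP_dvd : pure_poly %| h \Po P.
  apply: pure_poly_dvdp; rewrite map_comp_poly horner_comp -def_h.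
  exact/eqP/root_minCpoly.
apply: (@root_monic_Aint (minCpoly x)); [| exact: minCpoly_monic | exact: PaA].
rewrite /root def_h -horner_comp -map_comp_poly -(divpK hP_dvd) rmorphM /=.
by rewrite hornerM root_pure_poly // mulr0.
Qed.

Lemma scaled_coef_int (R : {poly rat}) (j : nat) :
  (size R <= n)%N -> (map_poly ratr R).[a] \in Aint -> (j < n)%N ->
  (n * `|m|)%N%:R * R`_j \is a Num.int.
Proof.
move=> szR RaA lt_jn; have [z z_prim] := C_prim_root_exists n_gt0.
have coefA : n%:R * ratr R`_j * a ^+ j \in Aint.
  rewrite -coef_map -(prim_root_coef_sum _ z_prim) ?size_map_poly //.
  apply: rpred_sum => k _; rewrite rpredM ?rpredX ?(Aint_prim_root z_prim) //.
  apply: Aint_conj_pure_root RaA.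
  by rewrite exprMn a_n -exprM mulnC exprM (prim_expr_order z_prim) expr1n mul1r.
have abs_m : (`|m|%N)%:R = a ^+ j * a ^+ (n - j) * (sgz m)%:~R :> algC.
  rewrite -exprD subnKC; last exact: ltnW.
  by rewrite a_n -intrM mulrC -abszEsg.
rewrite -Cint_rat; apply: Cint_rat_Aint (Crat_rat _) _.
have -> : ratr ((n * `|m|)%N%:R * R`_j) =
    n%:R * ratr R`_j * a ^+ j * a ^+ (n - j) * (sgz m)%:~R.
  by rewrite rmorphM /= ratr_nat natrM abs_m; ring.
apply: rpredM; last exact: Aint_int.
by apply: rpredM; rewrite ?rpredX ?Aint_pure_root.
Qed.

End PureRoot.

Theorem theorem2p3 (n : nat) (m : int) (a : algC) :
  (2 <= n)%N -> squarefree_int m -> m != 1 -> m != -1 ->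
  a ^+ n = m%:~R ->
  forall x : algC, in_ringOfIntegers a x ->
    in_Zadj a ((n %/ gcdn n `|m|)%N%:R * x).
Proof.
move=> n_ge2 sqf_m m_neq1 m_neqN1 a_n _ [[P ->] xA].
have n_gt0 : (0 < n)%N by apply: ltnW.
rewrite -(horner_modp_pure_poly a_n P) in xA *.
have szR := size_modp_pure_poly m n_gt0 P.
set R := (P %% _)%R in xA szR *; set g := gcdn n `|m|.
have -> : (n %/ g)%N%:R * (map_poly ratr R).[a] = (map_poly ratr ((n %/ g)%N%:R *: R)).[a].
  by rewrite map_polyZ hornerZ rmorph_nat.
apply/in_Zadj_polyOver_int/(polyOver_int_of_scaled n_gt0 a_n sqf_m (d := g * `|m|)).
- exact: leq_trans (size_scale_leq _ _) szR.
- by rewrite map_polyZ hornerZ rmorph_nat rpredM ?rpred_nat.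
- by rewrite muln_gt0 gcdn_gt0 n_gt0 absz_gt0 squarefree_int_neq0.
- move=> p p_pr; rewrite Euclid_dvdM // => /orP[p_dvd_g | //].
  exact: dvdn_trans p_dvd_g (dvdn_gcdr _ _).
move=> j lt_jn; rewrite coefZ mulrA -natrM mulnC mulnA divnK ?dvdn_gcdl //.
exact: (scaled_coef_int n_gt0 a_n sqf_m m_neq1 m_neqN1 szR xA lt_jn).
Qed.
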